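(* Let $K$ be a finite oriented simplicial complex, let $q,h,h'$ be non-negative integers, and fix the basis $\{\sigma_1^{(q)},\dots,\sigma_n^{(q)}\}$ of $C_q(K)$ given by the oriented $q$-simplices (and the analogous bases of $C_{q+h}(K)$ and $C_{q-h'}(K)$). Let $B_{q+h,h}$ and $B_{q,h'}$ be the matrices of $\partial_{q+h,h}\colon C_{q+h}(K)\to C_q(K)$ and $\partial_{q,h'}\colon C_q(K)\to C_{q-h'}(K)$ in these bases, and set $L^U_{q,h}=B_{q+h,h}B_{q+h,h}^t$, $L^L_{q,h'}=B_{q,h'}^tB_{q,h'}$ and $L_{q,h,h'}=L^U_{q,h}+L^L_{q,h'}$ (the matrix of the multi-combinatorial Laplacian $\Delta_{q,h,h'}=\partial_{q+h,h}\circ\partial^*_{q+h,h}+\partial^*_{q,h'}\circ\partial_{q,h'}$). Then $$\big(L^U_{q,h}\big)_{i,j}=\begin{cases}\deg_U^{h,q+h}(\sigma_i^{(q)}) & i=j,\\ \operatorname{odeg}_U^{q+h}(\sigma_i^{(q)},\sigma_j^{(q)}) & i\neq j,\end{cases}\qquad \big(L^L_{q,h'}\big)_{i,j}=\begin{cases}\binom{q+1}{q-h'+1} & i=j,\\ \operatorname{odeg}_L^{q-h'}(\sigma_i^{(q)},\sigma_j^{(q)}) & i\neq j,\end{cases}$$ and $$\big(L_{q,h,h'}\big)_{i,j}=\begin{cases}\deg_U^{h,q+h}(\sigma_i^{(q)})+\binom{q+1}{q-h'+1} & i=j,\\ \operatorname{odeg}_U^{q+h}(\sigma_i^{(q)},\sigma_j^{(q)})+\operatorname{odeg}_L^{q-h'}(\sigma_i^{(q)},\sigma_j^{(q)})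 & i\neq j.\end{cases}$$
   Context: $K$ is a finite abstract simplicial complex (finite family of nonempty finite vertex sets closed under nonempty subsets); a $q$-simplex has $q+1$ vertices; a face of a simplex is a simplex of $K$ contained in it (a simplex is a face of itself). Orientation: orderings of the vertices modulo even permutations; $[v_{\eta(0)},\dots,v_{\eta(q)}]=\operatorname{sign}(\eta)[v_0,\dots,v_q]$. Each simplex has a fixed orientation; $C_m(K)$ is the real vector space with basis the fixed-orientation $m$-simplices (opposite orientation = negative), $C_m(K)=0$ for $m\notin[0,\dim K]$, with the inner product making this basis orthonormal; $\partial^*$ denotes the adjoint with respect to these inner products (its matrix is the transpose). Multi-parameter boundary operator: for $m\ge k\ge0$, $\partial_{m,k}\colon C_m(K)\to C_{m-k}(K)$ is linear with $\partial_{m,k}([v_{\eta(0)},\dots,v_{\eta(m)}])=\sum_{J}\operatorname{sign}(\eta)\operatorname{sign}(\epsilon_J)[v_0,\dots,\widehat{v_{j_1}},\dots,\widehat{v_{j_k}},\dots,v_m]$, summing over subsets $J=\{j_1<\dots<j_k\}\subseteq\{0,\dots,m\}$ (hatted vertices removed, others in increasing index order), $\epsilon_J$ the permutation of $\{0,\dots,m\}$ with $r\mapsto j_{r+1}$ for $r<k$ and $k,\dots,m$ mapped increasingly onto the complement of $J$; if $m<k$ then $\partial_{m,k}=0$. For a $p$-simplex $\tau$ and a face $\sigma\subseteq\tau$ of dimension $m$, $\operatorname{sign}(\tau,\sigma)\in\{\pm1\}$ is the coefficient of $\sigma$ in $\partial_{p,p-m}(\tau)$ (so $\operatorname{sign}(\tau,\tau)=1$).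 Upper sign: $\operatorname{sig}_U(\sigma,\sigma';\tau^{(p)})=0$ if $\sigma\cup\sigma'\not\subseteq\tau^{(p)}$, else $\operatorname{sign}(\tau^{(p)},\sigma)\operatorname{sign}(\tau^{(p)},\sigma')$. Lower sign: $\operatorname{sig}_L(\sigma,\sigma';\tau^{(p)})=0$ if $\tau^{(p)}\not\subseteq\sigma\cap\sigma'$, else $\operatorname{sign}(\sigma,\tau^{(p)})\operatorname{sign}(\sigma',\tau^{(p)})$. Both are independent of the orientation of $\tau^{(p)}$. Oriented degrees: $\operatorname{odeg}^p_U(\sigma,\sigma')=\frac12\sum_{\tau^{(p)}}\operatorname{sig}_U(\sigma,\sigma';\tau^{(p)})$ and $\operatorname{odeg}^p_L(\sigma,\sigma')=\frac12\sum_{\tau^{(p)}}\operatorname{sig}_L(\sigma,\sigma';\tau^{(p)})$, sums over all oriented $p$-simplices of $K$ (each with both orientations). $\deg_U^{h,q+h}(\sigma^{(q)})$ is the number of $(q+h)$-simplices $\sigma^{(q+h)}$ of $K$ such that some $(q+h)$-simplex contains both $\sigma^{(q)}$ and $\sigma^{(q+h)}$, i.e. the number of $(q+h)$-simplices of $K$ having $\sigma^{(q)}$ as a face. *)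

From HB Require Import structures.
From mathcomp Require Import all_boot all_order all_algebra.
Set Implicit Arguments. Unset Strict Implicit. Unset Printing Implicit Defensive.
Import Order.TTheory GRing.Theory Num.Theory.
Local Open Scope ring_scope.

Section Defs.
Variable N : nat.
Notation V := 'I_N.

Definition is_complex (K : {set {set V}}) : Prop :=
  set0 \notin K /\
  forall s r : {set V}, s \in K -> r \subset s -> r != set0 -> r \in K.

(* A choice of orientation: for each simplex a fixed ordering of its vertices
   (the orientation is the class of that ordering modulo even permutations). *)
Definition is_orientation (K : {set {set V}}) (o : {set V} -> seq V) : Prop :=
  forall s, s \in K -> perm_eq (o s) (enum s).

Definition simp (K : {set {set V}}) (m : nat) : {set {set V}} :=
  [set s in K | #|s| == m.+1].

Definition basis (K : {set {set V}}) (m : nat) (i : 'I_#|simp K m|) : {set V} :=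
  enum_val i.

(* Number of inversions of a sequence of naturals; its parity is the sign of
   the permutation it represents. *)
Definition ninv (s : seq nat) : nat :=
  \sum_(i < size s) \sum_(j < size s | i < j) (nth 0 s j < nth 0 s i).

Variable R : realFieldType.

Definition sgnb (b : bool) : R := (-1) ^+ b.

(* sign of the ordering s relative to the ordering t of the same vertex set:
   [s] = relsign s t * [t] *)
Definition relsign (s t : seq V) : R := sgnb (odd (ninv [seq index x t | x <- s])).

Definition epsJ n (J : {set 'I_n}) : R :=
  sgnb (odd (ninv ([seq val j | j <- enum J] ++ [seq val j | j <- enum (~: J)]))).

Definition face (s : seq V) (J : {set 'I_(size s)}) : seq V :=
  mask [seq i \notin J | i : 'I_(size s)] s.

Variable o : {set V} -> seq V.

(* Coefficient of the basis simplex r (with its fixed orientation) in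
   partial_{m,k}([s]), where [s] = [v_{eta(0)},...,v_{eta(m)}] is an oriented
   simplex, v_0..v_m its fixed orientation:
   partial_{m,k}[s] = sum_J sign(eta) sign(eps_J) [v_0,..,^v_{j1},..,^v_{jk},..,v_m]. *)
Definition bd_coef (k : nat) (s : seq V) (r : {set V}) : R :=
  let S := [set x in s] in
  relsign s (o S) *
  \sum_(J : {set 'I_(size (o S))} | #|J| == k)
     epsJ J * (if [set x in face J] == r then relsign (face J) (o r) else 0).

(* Coefficient of the oriented simplex [t] in partial_{p,p-m}([s]). *)
Definition sgnf (s t : seq V) : R :=
  relsign t (o [set x in t]) * bd_coef (size s - size t) s [set x in t].

Definition sign_face (tau sigma : {set V}) : R := sgnf (o tau) (o sigma).

(* Matrix of partial_{c,k} : C_c(K) -> C_r(K) in the simplex bases (r = c - k). *)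
Definition Bmat (K : {set {set V}}) (r c k : nat) : 'M[R]_(#|simp K r|, #|simp K c|) :=
  \matrix_(i, j) bd_coef k (o (basis j)) (basis i).

(* the two orientations of an ordering *)
Definition swap12 (s : seq V) : seq V :=
  if s is a :: b :: t then b :: a :: t else s.
Definition both_or (s : seq V) : seq (seq V) := [:: s; swap12 s].

Definition sigU (sg sg' : {set V}) (s : seq V) : R :=
  if (sg :|: sg') \subset [set x in s] then sgnf s (o sg) * sgnf s (o sg') else 0.
Definition sigL (sg sg' : {set V}) (s : seq V) : R :=
  if [set x in s] \subset (sg :&: sg') then sgnf (o sg) s * sgnf (o sg') s else 0.

Definition odegU (K : {set {set V}}) (p : nat) (sg sg' : {set V}) : R :=
  2^-1 * \sum_(t in simp K p) \sum_(s <- both_or (o t)) sigU sg sg' s.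
Definition odegL (K : {set {set V}}) (p : nat) (sg sg' : {set V}) : R :=
  2^-1 * \sum_(t in simp K p) \sum_(s <- both_or (o t)) sigL sg sg' s.

End Defs.

Definition degU N (K : {set {set 'I_N}}) (h q : nat) (sg : {set 'I_N}) : nat :=
  #|[set t in simp K (q + h) | [exists t' in simp K (q + h), (sg :|: t) \subset t']]|.

From HB Require Import structures.
From mathcomp Require Import all_boot all_order all_algebra zify.
Set Implicit Arguments. Unset Strict Implicit. Unset Printing Implicit Defensive.
Import Order.TTheory GRing.Theory Num.Theory.
Local Open Scope ring_scope.

(* Both blocks are Gram matrices of a boundary matrix, so each entry is a sum,
   over (q+h)-simplices t (resp. (q-h')-simplices r), of a product of two
   incidence numbers.  The incidence number of r in an ordering u of a simplex
   is +-1 when r is a face of u of the right dimension and 0 otherwise: exactly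
   one set of positions, those of the vertices outside r, deletes u down to r.
   Hence the diagonal entries count the cofaces of sigma_i, resp. its faces
   (all of which lie in K, giving the binomial coefficient).  Off the diagonal
   the product of incidences is sign(t, sigma_i) sign(t, sigma_j); reorienting t
   multiplies both factors by the same sign, so averaging over the two
   orientations of t, as odeg does, changes nothing. *)

Lemma sumr_indicator (R : pzSemiRingType) (T : finType) (A : {pred T}) (P : pred T) :
  \sum_(x in A) (P x)%:R = #|[set x in A | P x]|%:R :> R.
Proof.
rewrite (eq_bigr (fun x => if P x then 1 else 0)) => [|x _]; last by case: (P x).
by rewrite -big_mkcondr sumr_const; congr (_ *+ _); apply: eq_card => x; rewrite inE.
Qed.

Section Incidence.
Variables (N : nat) (R : realFieldType) (o : {set 'I_N} -> seq 'I_N).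
Implicit Types (u s : seq 'I_N) (r : {set 'I_N}).

Definition incidence k u r : R :=
  \sum_(J : {set 'I_(size u)} | #|J| == k)
     epsJ R J * (if [set x in face J] == r then relsign R (face J) (o r) else 0).

Lemma bd_coefE k s r :
  bd_coef R o k s r = relsign R s (o [set x in s]) * incidence k (o [set x in s]) r.
Proof. by []. Qed.

Lemma relsign_id u : uniq u -> relsign R u u = 1.
Proof.
move=> uu; rewrite /relsign; suff -> : [seq index x u | x <- u] = iota 0 (size u).
  rewrite /ninv big1 // => i _; rewrite big1 // => j ij.
  by rewrite size_iota in i j ij *; rewrite !nth_iota // ltnNge ltnW.
elim: u uu => [|y u IHu] //= /andP[yNu uu]; rewrite eqxx -add1n iotaDl -IHu // -map_comp.
by congr (_ :: _); apply/eq_in_map => x xu /=; case: eqP => [yx|]; rewrite // yx xu in yNu.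
Qed.

Lemma relsign_sqr s s' : relsign R s s' ^+ 2 = 1.
Proof. exact: sqrr_sign. Qed.

Lemma epsJ_sqr n (J : {set 'I_n}) : epsJ R J ^+ 2 = 1.
Proof. exact: sqrr_sign. Qed.

Lemma mem_face u (J : {set 'I_(size u)}) i : uniq u ->
  (tnth (in_tuple u) i \in face J) = (i \notin J).
Proof.
move=> uu; rewrite /face in_mask // mem_tnth (tnth_nth (tnth (in_tuple u) i)) /=.
by rewrite index_uniq // (nth_map i) ?size_enum_ord // nth_ord_enum.
Qed.

Lemma face_setE u (J : {set 'I_(size u)}) : uniq u ->
  [set x in face J] = tnth (in_tuple u) @: ~: J.
Proof.
move=> uu; apply/setP => x; rewrite inE; apply/idP/imsetP => [xJ|[i iJ ->]].
  have /tnthP[i xi] : x \in in_tuple u := mem_mask xJ.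
  by exists i; rewrite // inE -mem_face // -xi.
by rewrite mem_face // -in_setC.
Qed.

Definition face_index u r : {set 'I_(size u)} := [set i | tnth (in_tuple u) i \notin r].

Lemma face_set_eq u (J : {set 'I_(size u)}) r : uniq u -> r \subset [set x in u] ->
  ([set x in face J] == r) = (J == face_index u r).
Proof.
move=> uu ru; have tinj : injective (tnth (in_tuple u)) by apply/tuple_uniqP.
rewrite face_setE //; apply/eqP/eqP => [<-|->].
  by apply/setP => i; rewrite inE mem_imset // inE negbK.
apply/setP => x; apply/imsetP/idP => [[i] /[!inE] /negPn ? -> //|xr].
have /tnthP[i xi] : x \in in_tuple u by have /subsetP/(_ x xr) := ru; rewrite inE.
by exists i; rewrite // !inE -xi xr.
Qed.

Lemma card_face_set u (J : {set 'I_(size u)}) : uniq u ->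
  #|[set x in face J]| = (size u - #|J|)%N.
Proof.
move=> uu; rewrite face_setE // card_imset; last exact/tuple_uniqP.
by rewrite (cardsCs (~: J)) setCK card_ord.
Qed.

Lemma incidenceE k u r : uniq u ->
  incidence k u r =
    if (r \subset [set x in u]) && (#|r| + k == size u)%N
    then epsJ R (face_index u r) * relsign R (face (face_index u r)) (o r) else 0.
Proof.
move=> uu; have [ru|rNu] /= := boolP (r \subset [set x in u]); last first.
  rewrite /incidence big1 // => J _; case: eqP => [fJ|]; rewrite ?mulr0 //.
  by case/negP: rNu; rewrite -fJ; apply/subsetP => x /[!inE] /mem_mask.
set J0 := face_index u r.
have cardJ0 : #|r| = (size u - #|J0|)%N.
  by have /eqP <- := etrans (face_set_eq J0 uu ru) (eqxx J0); rewrite card_face_set.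
have le_J0 : (#|J0| <= size u)%N by rewrite -[X in (_ <= X)%N]card_ord max_card.
set c := epsJ R J0 * relsign R (face J0) (o r).
rewrite /incidence (eq_bigr (fun J => if J == J0 then c else 0)); last first.
  by move=> J _; rewrite face_set_eq //; case: eqP => [->|]; rewrite ?mulr0.
have -> : (#|r| + k == size u)%N = (#|J0| == k) by rewrite cardJ0; apply/eqP/eqP; lia.
case: eqP => [cJ0|nJ0].
  by rewrite (bigD1 J0) ?cJ0 //= eqxx big1 ?addr0 // => J /andP[_ /negPf ->].
by rewrite big1 // => J /eqP cJ; case: eqP => // JJ0; rewrite -JJ0 in nJ0.
Qed.

Lemma incidence_eq0 k u r : uniq u -> ~~ (r \subset [set x in u]) -> incidence k u r = 0.
Proof. by move=> uu rNu; rewrite incidenceE // (negPf rNu). Qed.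

Lemma incidence_sqr k u r : uniq u ->
  incidence k u r ^+ 2 = ((r \subset [set x in u]) && (#|r| + k == size u)%N)%:R.
Proof.
move=> uu; rewrite incidenceE //; case: ifP; rewrite ?expr0n //.
by rewrite exprMn epsJ_sqr relsign_sqr mulr1.
Qed.

Lemma bd_coef_mul k s r r' :
  bd_coef R o k s r * bd_coef R o k s r' =
    incidence k (o [set x in s]) r * incidence k (o [set x in s]) r'.
Proof. by rewrite !bd_coefE mulrACA -expr2 relsign_sqr mul1r. Qed.

Lemma both_or_mean (F : seq 'I_N -> R) s c :
  F s = c -> F (swap12 s) = c -> 2^-1 * \sum_(s' <- both_or s) F s' = c.
Proof.
move=> Fs Fswap; rewrite /both_or !big_cons big_nil addr0 Fs Fswap -mulr2n mulrnAr -mulrnAl.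
by rewrite -mulr_natr mulVf ?mul1r // pnatr_eq0.
Qed.

End Incidence.

Lemma swap12_set N (s : seq 'I_N) : [set x in swap12 s] = [set x in s].
Proof. by case: s => [|a [|b s]] //; apply/setP => x; rewrite !inE orbCA. Qed.

Lemma swap12_size N (s : seq 'I_N) : size (swap12 s) = size s.
Proof. by case: s => [|a [|b s]]. Qed.

Section Complex.
Variables (N : nat) (R : realFieldType) (o : {set 'I_N} -> seq 'I_N).
Variable K : {set {set 'I_N}}.
Implicit Types (s : seq 'I_N) (r t sg : {set 'I_N}).

Lemma simpP m t : reflect (t \in K /\ #|t| = m.+1) (t \in simp K m).
Proof. by rewrite inE; apply: (iffP andP) => -[tK /eqP]. Qed.

Lemma degUE k m sg : degU K k m sg = #|[set t in simp K (m + k) | sg \subset t]|.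
Proof.
apply: eq_card => t; rewrite !inE -!andbA.
apply: andb_id2l => tK; apply: andb_id2l => /eqP ct.
apply/existsP/idP => [[t' /andP[/simpP[_ ct'] /[!subUset] /andP[sgt' tt']]]|sgt].
  by have /eqP -> : t == t' by rewrite eqEcard tt' ct ct' /=.
by exists t; rewrite inE tK ct eqxx subUset sgt subxx.
Qed.

Lemma card_faces p sg : is_complex K -> sg \in K ->
  #|[set r in simp K p | r \subset sg]| = 'C(#|sg|, p.+1).
Proof.
move=> [_ Kcl] sgK; rewrite -cards_draws; apply: eq_card => r; rewrite !inE.
apply/andP/andP => [[/andP[_ ->] ->] //|[rsg /eqP cr]]; split => //.
apply/andP; split; last by rewrite cr.
by apply: Kcl sgK rsg _; apply/eqP => r0; rewrite r0 cards0 in cr.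
Qed.

Hypothesis oK : is_orientation K o.

Lemma orientationP t : t \in K -> [/\ uniq (o t), [set x in o t] = t & size (o t) = #|t|].
Proof.
move=> tK; have ot := oK tK; split.
- by rewrite (perm_uniq ot) enum_uniq.
- by apply/setP => x; rewrite inE (perm_mem ot) mem_enum.
- by rewrite (perm_size ot) cardE.
Qed.

Lemma bd_coef_orientation k t r : t \in K -> bd_coef R o k (o t) r = incidence R o k (o t) r.
Proof. by case/orientationP=> ut st _; rewrite bd_coefE st relsign_id ?mul1r. Qed.

Lemma Bmat_incidence m n k i j :
  Bmat R o K m n k i j = incidence R o k (o (basis j)) (basis i).
Proof. by rewrite mxE bd_coef_orientation //; have /simpP[] := enum_valP j. Qed.

Lemma Bmat_mul_tr m n k (i j : 'I_#|simp K m|) :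
  (Bmat R o K m n k *m (Bmat R o K m n k)^T) i j =
    \sum_(t in simp K n) incidence R o k (o t) (basis i) * incidence R o k (o t) (basis j).
Proof.
rewrite mxE [RHS]big_enum_val; apply: eq_bigr => l _.
by rewrite [_^T _ _]mxE !Bmat_incidence.
Qed.

Lemma Bmat_tr_mul m n k (i j : 'I_#|simp K n|) :
  ((Bmat R o K m n k)^T *m Bmat R o K m n k) i j =
    \sum_(t in simp K m) incidence R o k (o (basis i)) t * incidence R o k (o (basis j)) t.
Proof.
rewrite mxE [RHS]big_enum_val; apply: eq_bigr => l _.
by rewrite [_^T _ _]mxE !Bmat_incidence.
Qed.

Lemma sgnf_orientation s sg : sg \in K ->
  sgnf R o s (o sg) = bd_coef R o (size s - #|sg|) s sg.
Proof. by case/orientationP=> usg ssg zsg; rewrite /sgnf ssg relsign_id ?mul1r ?zsg. Qed.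

Lemma sigUE m k sg sg' s : sg \in simp K m -> sg' \in simp K m ->
  [set x in s] \in K -> size s = (m + k).+1 ->
  sigU R o sg sg' s =
    incidence R o k (o [set x in s]) sg * incidence R o k (o [set x in s]) sg'.
Proof.
move=> /simpP[sgK csg] /simpP[sg'K csg'] /orientationP[ut st _] zs.
rewrite /sigU !sgnf_orientation // zs csg csg' subSS addKn bd_coef_mul.
case: ifP => // /negbT; rewrite subUset negb_and => /orP[] nsub.
  by rewrite (incidence_eq0 _ _ _ ut) ?st // mul0r.
by rewrite [X in _ * X](incidence_eq0 _ _ _ ut) ?st // mulr0.
Qed.

Lemma odegUE m k sg sg' : sg \in simp K m -> sg' \in simp K m ->
  odegU R o K (m + k) sg sg' =
    \sum_(t in simp K (m + k)) incidence R o k (o t) sg * incidence R o k (o t) sg'.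
Proof.
move=> sgS sg'S; rewrite /odegU mulr_sumr; apply: eq_bigr => t /simpP[tK ct].
have [_ st zt] := orientationP tK.
have sgU (s : seq 'I_N) : [set x in s] = t -> size s = #|t| -> sigU R o sg sg' s =
    incidence R o k (o t) sg * incidence R o k (o t) sg'.
  by move=> sS zs; subst t; rewrite (sigUE (k := k) sgS sg'S) // zs.
by apply: both_or_mean; apply: sgU; rewrite ?swap12_set ?swap12_size.
Qed.

Lemma sigLE m k sg sg' s : (k <= m)%N -> sg \in simp K m -> sg' \in simp K m ->
  size s = (m - k).+1 ->
  sigL R o sg sg' s =
    incidence R o k (o sg) [set x in s] * incidence R o k (o sg') [set x in s].
Proof.
move=> km /simpP[sgK csg] /simpP[sg'K csg'] zs.
have [usg ssg zsg] := orientationP sgK; have [usg' ssg' zsg'] := orientationP sg'K.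
rewrite /sigL /sgnf zsg zsg' zs csg csg' subSS subKn // !bd_coef_orientation //.
rewrite mulrACA -expr2 relsign_sqr mul1r.
case: ifP => // /negbT; rewrite subsetI negb_and => /orP[] nsub.
  by rewrite (incidence_eq0 _ _ _ usg) ?ssg // mul0r.
by rewrite [X in _ * X](incidence_eq0 _ _ _ usg') ?ssg' // mulr0.
Qed.

Lemma odegLE m k sg sg' : (k <= m)%N -> sg \in simp K m -> sg' \in simp K m ->
  odegL R o K (m - k) sg sg' =
    \sum_(r in simp K (m - k)) incidence R o k (o sg) r * incidence R o k (o sg') r.
Proof.
move=> km sgS sg'S; rewrite /odegL mulr_sumr; apply: eq_bigr => r /simpP[rK cr].
have [_ sr zr] := orientationP rK.
have sgL (s : seq 'I_N) : [set x in s] = r -> size s = #|r| -> sigL R o sg sg' s =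
    incidence R o k (o sg) r * incidence R o k (o sg') r.
  by move=> sS zs; subst r; rewrite (sigLE km) // zs.
by apply: both_or_mean; apply: sgL; rewrite ?swap12_set ?swap12_size.
Qed.

Lemma sum_incidence_cofaces m k sg : sg \in simp K m ->
  \sum_(t in simp K (m + k)) incidence R o k (o t) sg * incidence R o k (o t) sg =
    (degU K k m sg)%:R.
Proof.
move=> /simpP[_ csg]; rewrite degUE -sumr_indicator; apply: eq_bigr => t /simpP[tK ct].
have [ut st zt] := orientationP tK.
by rewrite -expr2 incidence_sqr // st zt csg ct addSn eqxx andbT.
Qed.

Lemma sum_incidence_faces m k sg : is_complex K -> (k <= m)%N -> sg \in simp K m ->
  \sum_(r in simp K (m - k)) incidence R o k (o sg) r * incidence R o k (o sg) r =
    'C(m.+1, (m - k).+1)%:R.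
Proof.
move=> cK km /simpP[sgK csg]; rewrite -csg -card_faces // -sumr_indicator.
apply: eq_bigr => r /simpP[_ cr]; have [usg ssg zsg] := orientationP sgK.
by rewrite -expr2 incidence_sqr // ssg zsg csg cr addSn subnK // eqxx andbT.
Qed.

End Complex.

Theorem mainTheorem4 (R : realFieldType) (N : nat) (K : {set {set 'I_N}})
  (o : {set 'I_N} -> seq 'I_N) (q h h' : nat) :
  is_complex K -> is_orientation K o -> (h' <= q)%N ->
  let BU := Bmat R o K q (q + h) h in
  let BL := Bmat R o K (q - h') q h' in
  let LU := BU *m BU^T in
  let LL := BL^T *m BL in
  let L := LU + LL in
  forall i j : 'I_#|simp K q|,
    let si := basis i in let sj := basis j in
    LU i j = (if i == j then (degU K h q si)%:R else odegU R o K (q + h) si sj) /\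
    LL i j = (if i == j then 'C(q.+1, (q - h').+1)%:R else odegL R o K (q - h') si sj) /\
    L i j = (if i == j then (degU K h q si)%:R + 'C(q.+1, (q - h').+1)%:R
             else odegU R o K (q + h) si sj + odegL R o K (q - h') si sj).
Proof.
move=> cK oK hq BU BL LU LL L i j si sj.
have siS : si \in simp K q := enum_valP i.
have sjS : sj \in simp K q := enum_valP j.
have LUij : LU i j = (if i == j then (degU K h q si)%:R else odegU R o K (q + h) si sj).
  rewrite Bmat_mul_tr //; case: eqP => [<-|_]; first exact: sum_incidence_cofaces.
  by rewrite odegUE.
have LLij : LL i j = (if i == j then 'C(q.+1, (q - h').+1)%:R else odegL R o K (q - h') si sj).
  rewrite Bmat_tr_mul //; case: eqP => [<-|_]; first exact: sum_incidence_faces.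
  by rewrite odegLE.
have Lij : L i j = LU i j + LL i j by rewrite [L i j]mxE.
by rewrite Lij LUij LLij; case: eqP.
Qed.
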